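(* Consider the setting and definitions in the context. Then $V_{con}-V_{adj}$ is positive semidefinite.
   Context: For each $n$, let $N_n=\{1,\dots,n\}$ and let $\{Y_{n,i}:i\in N_n\}$, $Y_{n,i}\in\mathbb{R}^v$, be random vectors with finite second moments (means may differ across $i$). Each $i$ has a cluster index $g(i)\in\{1,\dots,G\}$ and a time index $t(i)\in\{1,\dots,T\}$. Let $N_t^T=\{i:t(i)=t\}$, $N_g^G=\{i:g(i)=g\}$, $N_{t,g}^{T\cap G}=N_t^T\cap N_g^G$, and $y_t:=\sum_{i\in N_t^T}Y_{n,i}$. Let $M$ be a positive integer and $\omega(m,M)\in[0,1]$ kernel weights. Define $V_{con}:=\sum_{i\in N_n}\sum_{j\in N^G_{g(i)}}E[Y_{n,i}Y_{n,j}']+\sum_{i\in N_n}\sum_{j\in N^T_{t(i)}}E[Y_{n,i}Y_{n,j}']+\sum_{m=1}^M\omega(m,M)\left(\sum_{t=1}^{T-m}E[y_ty_{t+m}']+\sum_{t=1}^{T-m}E[y_{t+m}y_t']+2\sum_{t=1}^TE[y_ty_t']\right)$, $V_{adj}:=\sum_{i\in N_n}\sum_{j\in N^G_{g(i)}}\mathrm{Cov}(Y_{n,i},Y_{n,j})+\sum_{i\in N_n}\sum_{j\in N^T_{t(i)}}\mathrm{Cov}(Y_{n,i},Y_{n,j})-\sum_{i\in N_n}\sum_{j\in N^{T\cap G}_{t(i),g(i)}}\mathrm{Cov}(Y_{n,i},Y_{n,j})+\sum_{m=1}^M\sum_{t=1}^{T-m}\omega(m,M)\mathrm{Cov}(y_t,y_{t+m})+\sum_{m=1}^M\sum_{t=1}^{T-m}\omega(m,M)\mathrm{Cov}(y_{t+m},y_t)$,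 where $\mathrm{Cov}(X,Z)=E[XZ']-E[X]E[Z]'$. *)

From HB Require Import structures.
From mathcomp Require Import all_boot all_order all_algebra.
From mathcomp Require Import all_classical all_reals all_analysis.
Set Implicit Arguments. Unset Strict Implicit. Unset Printing Implicit Defensive.
Import Order.TTheory GRing.Theory Num.Theory.
Local Open Scope ring_scope.

Section Defs.
Context {d : measure_display} {Ω : measurableType d} {R : realType}.
Variable P : probability Ω R.
Variable v : nat.

Definition rvec := 'I_v -> Ω -> R.

Definition EM (X Z : rvec) : 'M[R]_v :=
  \matrix_(a < v, b < v) fine ('E_P[fun w => (X a w * Z b w)%R])%E.

Definition CovM (X Z : rvec) : 'M[R]_v :=
  \matrix_(a < v, b < v) fine (covariance P (X a) (Z b)).

Definition psd (A : 'M[R]_v) : Prop :=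
  A^T = A /\ forall x : 'cV[R]_v, 0 <= (x^T *m A *m x) 0 0.

Variables (n G T : nat) (Y : 'I_n -> rvec) (g : 'I_n -> 'I_G) (tm : 'I_n -> 'I_T).

(* y_t := sum over i with t(i) = t of Y_i; time periods are 0, ..., T-1 *)
Definition ysum (t : nat) : rvec :=
  fun a w => \sum_(i < n | (tm i : nat) == t) Y i a w.

Variables (M : nat) (omega : nat -> nat -> R).

Definition Vcon : 'M[R]_v :=
  \sum_(i < n) \sum_(j < n | g j == g i) EM (Y i) (Y j)
  + \sum_(i < n) \sum_(j < n | tm j == tm i) EM (Y i) (Y j)
  + \sum_(1 <= m < M.+1) omega m M *:
      (\sum_(0 <= t < T - m) EM (ysum t) (ysum (t + m))
       + \sum_(0 <= t < T - m) EM (ysum (t + m)) (ysum t)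
       + 2%:R *: \sum_(0 <= t < T) EM (ysum t) (ysum t)).

Definition Vadj : 'M[R]_v :=
  \sum_(i < n) \sum_(j < n | g j == g i) CovM (Y i) (Y j)
  + \sum_(i < n) \sum_(j < n | tm j == tm i) CovM (Y i) (Y j)
  - \sum_(i < n) \sum_(j < n | (tm j == tm i) && (g j == g i)) CovM (Y i) (Y j)
  + \sum_(1 <= m < M.+1) \sum_(0 <= t < T - m) omega m M *: CovM (ysum t) (ysum (t + m))
  + \sum_(1 <= m < M.+1) \sum_(0 <= t < T - m) omega m M *: CovM (ysum (t + m)) (ysum t).

End Defs.

From Pilot Require Import Defs.
From HB Require Import structures.
From mathcomp Require Import all_boot all_order all_algebra.
From mathcomp Require Import all_classical all_reals all_analysis.
From mathcomp Require Import ssrAC ring lra.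

(* Write D(X, Z) := E[X Z'] - Cov(X, Z) = E[X] E[Z]'.  The cluster and time
   double sums of Vcon - Vadj are sums of D(Y_i, Y_j) over the blocks of a
   partition of the indices, so each block contributes (sum_i E Y_i)(sum_i E Y_i)',
   which is psd.  The subtracted intersection term enters with a plus sign and
   is, cell by cell, the covariance matrix of the cell sum.  For each lag m the
   weight omega(m, M) >= 0 multiplies
     sum_t (mu_t mu_(t+m)' + mu_(t+m) mu_t') + 2 sum_t E[y_t y_t'],  mu_t := E y_t,
   and since E[y_t y_t'] dominates mu_t mu_t', the quadratic form of this matrix is
   at least sum_t (x'mu_t + x'mu_(t+m))^2 >= 0. *)

Set Implicit Arguments. Unset Strict Implicit. Unset Printing Implicit Defensive.
Import Order.TTheory GRing.Theory Num.Theory.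
Local Open Scope ring_scope.

Section LagSums.
Variable R : realDomainType.

Lemma sumr_cond_le (f : nat -> R) (P : pred nat) a b : (forall t, 0 <= f t) ->
  \sum_(a <= t < b | P t) f t <= \sum_(a <= t < b) f t.
Proof. by move=> f_ge0; rewrite [leRHS](bigID P) /= lerDl sumr_ge0. Qed.

Lemma lag_sum_ge0 (a V : nat -> R) T m : (forall t, a t ^+ 2 <= V t) ->
  0 <= \sum_(0 <= t < T - m) a t * a (t + m)%N
       + \sum_(0 <= t < T - m) a (t + m)%N * a t
       + 2%:R * \sum_(0 <= t < T) V t.
Proof.
move=> aV.
have sq_ge0 t : 0 <= a t ^+ 2 by exact: sqr_ge0.
have sqV : \sum_(0 <= t < T) a t ^+ 2 <= \sum_(0 <= t < T) V t.
  by apply: ler_sum => t _.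
have head : \sum_(0 <= t < T - m) a t ^+ 2 <= \sum_(0 <= t < T) a t ^+ 2.
  by rewrite (big_nat_widen _ _ _ _ _ (leq_subr m T)) sumr_cond_le.
have tail : \sum_(0 <= t < T - m) a (t + m)%N ^+ 2 <= \sum_(0 <= t < T) a t ^+ 2.
  have -> : \sum_(0 <= t < T - m) a (t + m)%N ^+ 2 = \sum_(m <= t < T) a t ^+ 2.
    by rewrite -[in RHS](add0n m) big_addn.
  by rewrite (big_nat_widenl _ _ _ _ _ (leq0n m)) sumr_cond_le.
have squares : 0 <= \sum_(0 <= t < T - m) (a t + a (t + m)%N) ^+ 2.
  by apply: sumr_ge0 => t _; exact: sqr_ge0.
have expand : \sum_(0 <= t < T - m) (a t + a (t + m)%N) ^+ 2
  = \sum_(0 <= t < T - m) a t ^+ 2 + \sum_(0 <= t < T - m) a (t + m)%N ^+ 2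
    + \sum_(0 <= t < T - m) a t * a (t + m)%N
    + \sum_(0 <= t < T - m) a (t + m)%N * a t.
  by rewrite -!big_split; apply: eq_bigr => t _ /=; ring.
lra.
Qed.

End LagSums.

Section PositiveSemidefinite.
Context {R : realType} {v : nat}.
Implicit Types (A B : 'M[R]_v) (u w x : 'cV[R]_v).

Definition qform x A : R := (x^T *m A *m x) 0 0.

Lemma qformD x : {morph qform x : A B / A + B}.
Proof. by move=> A B; rewrite /qform mulmxDr mulmxDl mxE. Qed.

Lemma qformB x : {morph qform x : A B / A - B}.
Proof. by move=> A B; rewrite /qform mulmxBr mulmxBl !mxE. Qed.

Lemma qformZ x c A : qform x (c *: A) = c * qform x A.
Proof. by rewrite /qform -scalemxAr -scalemxAl mxE. Qed.

Lemma qform_sum x I (r : seq I) (p : pred I) (F : I -> 'M[R]_v) :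
  qform x (\sum_(i <- r | p i) F i) = \sum_(i <- r | p i) qform x (F i).
Proof.
by apply: big_morph; [exact: qformD | rewrite /qform mulmx0 mul0mx mxE].
Qed.

Lemma qform_outer x u w : qform x (u *m w^T) = (x^T *m u) 0 0 * (x^T *m w) 0 0.
Proof.
rewrite /qform -!mulmxA mulmxA mxE big_ord1.
by rewrite -[w^T *m x]trmxK trmx_mul trmxK [X in _ * X]mxE.
Qed.

Lemma psd0 : psd (0 : 'M[R]_v).
Proof. by split=> [|x]; rewrite ?trmx0 // mulmx0 mul0mx mxE. Qed.

Lemma psdD A B : psd A -> psd B -> psd (A + B).
Proof.
move=> [symA qA] [symB qB]; split; first by rewrite linearD /= symA symB.
by move=> x; rewrite -/(qform x _) qformD addr_ge0 ?qA ?qB.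
Qed.

Lemma psdZ c A : 0 <= c -> psd A -> psd (c *: A).
Proof.
move=> c_ge0 [symA qA]; split; first by rewrite linearZ /= symA.
by move=> x; rewrite -/(qform x _) qformZ mulr_ge0 ?qA.
Qed.

Lemma psd_sum I (r : seq I) (p : pred I) (F : I -> 'M[R]_v) :
  (forall i, p i -> psd (F i)) -> psd (\sum_(i <- r | p i) F i).
Proof. by apply: big_ind; [exact: psd0 | exact: psdD]. Qed.

Lemma psd_outer u : psd (u *m u^T).
Proof.
split=> [|x]; first by rewrite trmx_mul trmxK.
by rewrite -/(qform x _) qform_outer -expr2 sqr_ge0.
Qed.

Lemma sum_outer I J (r : seq I) (s : seq J) (p : pred I) (q : pred J)
    (u : I -> 'cV[R]_v) (w : J -> 'cV[R]_v) :
  \sum_(i <- r | p i) \sum_(j <- s | q j) u i *m (w j)^T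
  = (\sum_(i <- r | p i) u i) *m (\sum_(j <- s | q j) w j)^T.
Proof.
rewrite [(\sum_(j <- s | q j) w j)^T]raddf_sum mulmx_suml.
by apply: eq_bigr => i _; rewrite mulmx_sumr.
Qed.

Lemma psd_block (I K : finType) (key : I -> K) (F : I -> I -> 'M[R]_v) :
  (forall c, psd (\sum_(i | key i == c) \sum_(j | key j == c) F i j)) ->
  psd (\sum_i \sum_(j | key j == key i) F i j).
Proof.
move=> psdF; rewrite (partition_big key predT) //=; apply: psd_sum => c _.
rewrite (eq_bigr (fun i => \sum_(j | key j == c) F i j)); first exact: psdF.
by move=> i /eqP ->.
Qed.

Lemma psd_block_outer (I K : finType) (key : I -> K) (u : I -> 'cV[R]_v) :
  psd (\sum_i \sum_(j | key j == key i) u i *m (u j)^T).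
Proof. by apply: psd_block => c; rewrite sum_outer; exact: psd_outer. Qed.

Lemma psd_lag (u : nat -> 'cV[R]_v) (V : nat -> 'M[R]_v) T m :
  (forall t, psd (V t - u t *m (u t)^T)) ->
  psd (\sum_(0 <= t < T - m) u t *m (u (t + m)%N)^T
       + \sum_(0 <= t < T - m) u (t + m)%N *m (u t)^T
       + 2%:R *: \sum_(0 <= t < T) V t).
Proof.
move=> psdV; have symV t : (V t)^T = V t.
  by have [+ _] := psdV t; rewrite linearB /= trmx_mul trmxK => /addIr.
split.
  rewrite !linearD linearZ /= !raddf_sum /= [X in X + _ = _]addrC.
  by congr (_ + _ + _); apply: eq_bigr => t _; rewrite ?trmx_mul ?trmxK ?symV.
move=> x; rewrite -/(qform x _) !qformD qformZ !qform_sum.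
under eq_bigr do rewrite qform_outer.
under [X in _ + X + _]eq_bigr do rewrite qform_outer.
apply: lag_sum_ge0 => t; have [_ /(_ x)] := psdV t.
by rewrite -/(qform x _) qformB qform_outer subr_ge0 expr2.
Qed.

End PositiveSemidefinite.

Section Moments.
Context {d : measure_display} {Ω : measurableType d} {R : realType}.
Variable P : probability Ω R.
Local Notation L2 X := (forall a, X a \in Lfun P 2%:E).

Lemma Lfun2_Lfun1 (f : Ω -> R) : f \in Lfun P 2%:E -> f \in Lfun P 1.
Proof. by apply: Lfun_subset12; exact: fin_num_measure. Qed.

Lemma Lfun_sum (q : R) I (r : seq I) (p : pred I) (F : I -> Ω -> R) : 1 <= q ->
  (forall i, p i -> F i \in Lfun P q%:E) ->
  (fun w => \sum_(i <- r | p i) F i w) \in Lfun P q%:E.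
Proof.
by move=> q_ge1 LF; rewrite -fct_sumE; apply: rpred_sum => i /LF.
Qed.

Lemma LfunZ (q c : R) (f : Ω -> R) : 1 <= q -> f \in Lfun P q%:E ->
  (fun w => c * f w) \in Lfun P q%:E.
Proof. by rewrite -/(c \*o f) mul_funC; exact: Lfun_scale. Qed.

Lemma Lfun_lincomb (q : R) I (r : seq I) (p : pred I) (c : I -> R)
    (F : I -> Ω -> R) :
  1 <= q -> (forall i, p i -> F i \in Lfun P q%:E) ->
  (fun w => \sum_(i <- r | p i) c i * F i w) \in Lfun P q%:E.
Proof. by move=> q_ge1 LF; apply: Lfun_sum => // i /LF; exact: LfunZ. Qed.

Lemma fine_expectationD (f h : Ω -> R) : f \in Lfun P 1 -> h \in Lfun P 1 ->
  fine 'E_P[fun w => f w + h w] = fine 'E_P[f] + fine 'E_P[h].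
Proof.
move=> f1 h1; rewrite -[fun w => _]/(f \+ h) expectationD //.
by rewrite fineD // expectation_fin_num.
Qed.

Lemma fine_expectationZ (c : R) (f : Ω -> R) : f \in Lfun P 1 ->
  fine 'E_P[fun w => c * f w] = c * fine 'E_P[f].
Proof.
move=> f1; rewrite -[fun w => _]/(c \*o f) mul_funC expectationZl //.
by rewrite fineM // expectation_fin_num.
Qed.

Lemma fine_expectation_lincomb I (r : seq I) (p : pred I) (c : I -> R)
    (F : I -> Ω -> R) :
  (forall i, p i -> F i \in Lfun P 1) ->
  fine 'E_P[fun w => \sum_(i <- r | p i) c i * F i w]
  = \sum_(i <- r | p i) c i * fine 'E_P[F i].
Proof.
move=> LF; elim: r => [|i r IH].
  under eq_fun do rewrite big_nil.
  by rewrite big_nil -[fun=> _]/(cst 0) expectation_cst.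
under eq_fun do rewrite big_cons.
rewrite big_cons; case p_i: (p i); last exact: IH.
rewrite fine_expectationD ?fine_expectationZ ?IH ?LfunZ ?LF //.
exact: Lfun_lincomb.
Qed.

Lemma fine_expectation_sum I (r : seq I) (p : pred I) (F : I -> Ω -> R) :
  (forall i, p i -> F i \in Lfun P 1) ->
  fine 'E_P[fun w => \sum_(i <- r | p i) F i w] = \sum_(i <- r | p i) fine 'E_P[F i].
Proof.
move=> LF; transitivity (fine 'E_P[fun w => \sum_(i <- r | p i) 1 * F i w]).
  by congr (fine (expectation P _)); apply: funext => w; apply: eq_bigr => i _; rewrite mul1r.
by rewrite fine_expectation_lincomb //; apply: eq_bigr => i _; rewrite mul1r.
Qed.

Definition mean k (X : 'I_k -> Ω -> R) : 'cV[R]_k := \col_a fine 'E_P[X a].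

Lemma EM_tr k (X Z : 'I_k -> Ω -> R) : (Defs.EM P X Z)^T = Defs.EM P Z X.
Proof.
apply/matrixP => a b; rewrite !mxE; congr (fine (expectation P _)).
by apply: funext => w; rewrite mulrC.
Qed.

Lemma CovM_tr k (X Z : 'I_k -> Ω -> R) : (CovM P X Z)^T = CovM P Z X.
Proof. by apply/matrixP => a b; rewrite !mxE covarianceC. Qed.

Lemma CovME k (X Z : 'I_k -> Ω -> R) : L2 X -> L2 Z ->
  CovM P X Z = Defs.EM P X Z - mean X *m (mean Z)^T.
Proof.
move=> X2 Z2; apply/matrixP => a b; rewrite !mxE big_ord1 !mxE.
have [Xa1 Zb1] := (Lfun2_Lfun1 (X2 a), Lfun2_Lfun1 (Z2 b)).
have XZ1 := Lfun2_mul_Lfun1 (X2 a) (Z2 b).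
rewrite covarianceE // fineB ?fin_numM ?expectation_fin_num //.
by rewrite fineM ?expectation_fin_num.
Qed.

Lemma EM_sub_CovM k (X Z : 'I_k -> Ω -> R) : L2 X -> L2 Z ->
  Defs.EM P X Z - CovM P X Z = mean X *m (mean Z)^T.
Proof. by move=> X2 Z2; rewrite CovME // subKr. Qed.

Lemma Lfun2_sum_rv I (r : seq I) (p : pred I) k (X : I -> 'I_k -> Ω -> R) :
  (forall i, L2 (X i)) -> L2 (fun a w => \sum_(i <- r | p i) X i a w).
Proof. by move=> X2 a; apply: Lfun_sum => [|i _]; rewrite ?ler1n. Qed.

Lemma mean_sum I (r : seq I) (p : pred I) k (X : I -> 'I_k -> Ω -> R) :
  (forall i, L2 (X i)) ->
  mean (fun a w => \sum_(i <- r | p i) X i a w) = \sum_(i <- r | p i) mean (X i).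
Proof.
move=> X2; apply/matrixP => a b; rewrite !mxE summxE fine_expectation_sum.
  by apply: eq_bigr => i _; rewrite mxE.
by move=> i _; exact: Lfun2_Lfun1.
Qed.

Lemma EM_sum I J (r : seq I) (s : seq J) (p : pred I) (q : pred J) k
    (X : I -> 'I_k -> Ω -> R) (Z : J -> 'I_k -> Ω -> R) :
  (forall i, L2 (X i)) -> (forall j, L2 (Z j)) ->
  Defs.EM P (fun a w => \sum_(i <- r | p i) X i a w)
            (fun b w => \sum_(j <- s | q j) Z j b w)
  = \sum_(i <- r | p i) \sum_(j <- s | q j) Defs.EM P (X i) (Z j).
Proof.
move=> X2 Z2; apply/matrixP => a b; rewrite mxE summxE.
transitivity
  (fine 'E_P[fun w => \sum_(i <- r | p i) \sum_(j <- s | q j) X i a w * Z j b w]).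
  congr (fine (expectation P _)); apply: funext => w; rewrite mulr_suml.
  by apply: eq_bigr => i _; rewrite mulr_sumr.
rewrite fine_expectation_sum => [|i _]; last first.
  by apply: Lfun_sum => // j _; exact: Lfun2_mul_Lfun1.
apply: eq_bigr => i _; rewrite summxE fine_expectation_sum => [|j _]; last first.
  exact: Lfun2_mul_Lfun1.
by apply: eq_bigr => j _; rewrite mxE.
Qed.

Lemma CovM_sum I J (r : seq I) (s : seq J) (p : pred I) (q : pred J) k
    (X : I -> 'I_k -> Ω -> R) (Z : J -> 'I_k -> Ω -> R) :
  (forall i, L2 (X i)) -> (forall j, L2 (Z j)) ->
  CovM P (fun a w => \sum_(i <- r | p i) X i a w)
         (fun b w => \sum_(j <- s | q j) Z j b w)
  = \sum_(i <- r | p i) \sum_(j <- s | q j) CovM P (X i) (Z j).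
Proof.
move=> X2 Z2; rewrite CovME; [|exact: Lfun2_sum_rv..].
rewrite EM_sum // !mean_sum //.
rewrite -sum_outer -sumrB; apply: eq_bigr => i _.
by rewrite -sumrB; apply: eq_bigr => j _; rewrite CovME.
Qed.

Definition mulmx_rv m k (A : 'M[R]_(m, k)) (X : 'I_k -> Ω -> R) : 'I_m -> Ω -> R :=
  fun i w => \sum_a A i a * X a w.

Lemma mulmx_rv_L2 m k (A : 'M[R]_(m, k)) X : L2 X -> L2 (mulmx_rv A X).
Proof. by move=> X2 i; apply: Lfun_lincomb => [|a _]; rewrite ?ler1n. Qed.

Lemma mean_mulmx m k (A : 'M[R]_(m, k)) X : L2 X -> mean (mulmx_rv A X) = A *m mean X.
Proof.
move=> X2; apply/matrixP => i j; rewrite !mxE fine_expectation_lincomb => [|a _].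
  by apply: eq_bigr => a _; rewrite mxE.
exact: Lfun2_Lfun1.
Qed.

Lemma EM_mulmx m k (A B : 'M[R]_(m, k)) X Z : L2 X -> L2 Z ->
  Defs.EM P (mulmx_rv A X) (mulmx_rv B Z) = A *m Defs.EM P X Z *m B^T.
Proof.
move=> X2 Z2; apply/matrixP => i j; rewrite -mulmxA [LHS]mxE [RHS]mxE.
transitivity (fine 'E_P[fun w => \sum_a A i a * \sum_b B j b * (X a w * Z b w)]).
  congr (fine (expectation P _)); apply: funext => w; rewrite /mulmx_rv mulr_suml.
  apply: eq_bigr => a _; rewrite -mulrA mulr_sumr; congr (_ * _).
  by apply: eq_bigr => b _; rewrite mulrCA.
rewrite fine_expectation_lincomb => [|a _]; last first.
  by apply: Lfun_lincomb => // b _; exact: Lfun2_mul_Lfun1.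
apply: eq_bigr => a _; rewrite mxE fine_expectation_lincomb => [|b _]; last first.
  exact: Lfun2_mul_Lfun1.
by congr (_ * _); apply: eq_bigr => b _; rewrite !mxE mulrC.
Qed.

Lemma CovM_mulmx m k (A B : 'M[R]_(m, k)) X Z : L2 X -> L2 Z ->
  CovM P (mulmx_rv A X) (mulmx_rv B Z) = A *m CovM P X Z *m B^T.
Proof.
move=> X2 Z2; rewrite CovME; [|exact: mulmx_rv_L2..].
by rewrite EM_mulmx // !mean_mulmx // CovME // mulmxBr mulmxBl trmx_mul !mulmxA.
Qed.

Lemma psd_CovM k (X : 'I_k -> Ω -> R) : L2 X -> psd (CovM P X X).
Proof.
move=> X2; split=> [|x]; first exact: CovM_tr.
rewrite -{2}[x]trmxK -CovM_mulmx // mxE.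
exact/fine_ge0/variance_ge0.
Qed.

Lemma psd_block_CovM (I K : finType) (key : I -> K) k (X : I -> 'I_k -> Ω -> R) :
  (forall i, L2 (X i)) -> psd (\sum_i \sum_(j | key j == key i) CovM P (X i) (X j)).
Proof.
move=> X2; apply: psd_block => c.
by rewrite -CovM_sum //; exact/psd_CovM/Lfun2_sum_rv.
Qed.

End Moments.

Section Decomposition.
Context {d : measure_display} {Ω : measurableType d} {R : realType}.
Variables (P : probability Ω R) (v n G T : nat) (Y : 'I_n -> 'I_v -> Ω -> R).
Variables (g : 'I_n -> 'I_G) (tm : 'I_n -> 'I_T) (M : nat) (omega : nat -> nat -> R).
Hypothesis Y2 : forall i a, Y i a \in Lfun P 2%:E.

Local Notation y := (ysum Y tm).
Local Notation mu i := (mean P (Y i)).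
Local Notation nu t := (mean P (y t)).

Lemma ysum_L2 t a : y t a \in Lfun P 2%:E.
Proof. exact: Lfun2_sum_rv. Qed.

Lemma Vcon_sub_Vadj : Vcon P Y g tm M omega - Vadj P Y g tm M omega =
  \sum_i \sum_(j | g j == g i) mu i *m (mu j)^T
  + \sum_i \sum_(j | tm j == tm i) mu i *m (mu j)^T
  + \sum_i \sum_(j | (tm j, g j) == (tm i, g i)) CovM P (Y i) (Y j)
  + \sum_(1 <= m < M.+1) omega m M *:
      (\sum_(0 <= t < T - m) nu t *m (nu (t + m)%N)^T
       + \sum_(0 <= t < T - m) nu (t + m)%N *m (nu t)^T
       + 2%:R *: \sum_(0 <= t < T) Defs.EM P (y t) (y t)).
Proof.
have regroup (V : zmodType) (a b w a' b' c x z : V) :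
    a + b + w - (a' + b' - c + x + z) = (a - a') + (b - b') + c + (w - x - z).
  by rewrite !opprD opprK !addrA [LHS](ACl (1*4*2*5*6*3*7*8)).
have regroup_lag (V : zmodType) (a b c a' b' : V) :
    a + b + c - a' - b' = (a - a') + (b - b') + c.
  by rewrite !addrA [LHS](ACl (1*4*2*5*3)).
have diff2 (c : 'I_n -> 'I_n -> bool) :
    \sum_i \sum_(j | c i j) Defs.EM P (Y i) (Y j)
    - \sum_i \sum_(j | c i j) CovM P (Y i) (Y j)
    = \sum_i \sum_(j | c i j) mu i *m (mu j)^T.
  rewrite -sumrB; apply: eq_bigr => i _; rewrite -sumrB.
  by apply: eq_bigr => j _; exact: EM_sub_CovM.
have diff1 (f h : nat -> nat) N :
    \sum_(0 <= t < N) Defs.EM P (y (f t)) (y (h t))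
    - \sum_(0 <= t < N) CovM P (y (f t)) (y (h t))
    = \sum_(0 <= t < N) nu (f t) *m (nu (h t))^T.
  by rewrite -sumrB; apply: eq_bigr => t _; apply: EM_sub_CovM; exact: ysum_L2.
(* [(tm j, g j) == (tm i, g i)] computes to the cell condition of [Vadj]. *)
rewrite /Vcon /Vadj regroup !diff2; congr (_ + _ + _ + _).
rewrite -!sumrB; apply: eq_bigr => m _; rewrite -!scaler_sumr -!scalerBr.
by rewrite regroup_lag !diff1.
Qed.

End Decomposition.

Theorem proposition1 (d : measure_display) (Ω : measurableType d) (R : realType)
  (P : probability Ω R) (v n G T : nat)
  (Y : 'I_n -> 'I_v -> Ω -> R) (g : 'I_n -> 'I_G) (tm : 'I_n -> 'I_T)
  (M : nat) (omega : nat -> nat -> R) :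
  (forall i a, Y i a \in Lfun P 2%:E) ->
  (0 < M)%N ->
  (forall m, 0 <= omega m M <= 1) ->
  psd (Vcon P Y g tm M omega - Vadj P Y g tm M omega).
Proof.
move=> Y2 _ omega01; rewrite Vcon_sub_Vadj //.
apply: psdD; [apply: psdD; [apply: psdD|] |].
- exact: psd_block_outer.
- exact: psd_block_outer.
- exact: psd_block_CovM.
apply: psd_sum => m _; apply: psdZ; first by case/andP: (omega01 m).
apply: psd_lag => t; have y2 := ysum_L2 tm Y2 t.
by rewrite -CovME //; exact: psd_CovM.
Qed.
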